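(* The set $S_Z$ is empty.
   Context: All graphs are finite and simple. A graph $G$ is a minimal prime graph complement if $G$ has at least $2$ vertices and: (1) the complement $\overline{G}$ is connected; (2) $G$ is triangle-free; (3) $G$ is $3$-colorable; (4) for any two distinct nonadjacent vertices $u,v$ of $G$, adding the edge $uv$ to $G$ yields a graph that either contains a triangle or is not $3$-colorable. Standing setup: $\Gamma$ is a minimal prime graph complement with a vertex $X$ of degree $2$, whose two neighbors are $A$ and $B$. Among the vertices of $\Gamma$ other than $X,A,B$: $S_A$ is the set of those adjacent to $A$ but not $B$; $S_B$ the set of those adjacent to $B$ but not $A$; $S_Y$ the set of those adjacent to both $A$ and $B$; $S_Z$ the set of those adjacent to neither $A$ nor $B$. *)

From mathcomp Require Import all_boot.
Set Implicit Arguments. Unset Strict Implicit. Unset Printing Implicit Defensive.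

Definition simple_graph (T : finType) (e : rel T) : Prop :=
  symmetric e /\ irreflexive e.

Definition compl_rel (T : finType) (e : rel T) : rel T :=
  fun x y => (x != y) && ~~ e x y.

Definition compl_connected (T : finType) (e : rel T) : Prop :=
  forall x y : T, connect (compl_rel e) x y.

Definition triangle_free (T : finType) (e : rel T) : Prop :=
  forall x y z : T, ~ [&& e x y, e y z & e x z].

Definition three_colorable (T : finType) (e : rel T) : Prop :=
  exists c : T -> 'I_3, forall x y : T, e x y -> c x != c y.

Definition add_edge (T : finType) (e : rel T) (u v : T) : rel T :=
  fun x y => [|| e x y, (x == u) && (y == v) | (x == v) && (y == u)].

Definition minimal_prime_graph_complement (T : finType) (e : rel T) : Prop :=
  [/\ 2 <= #|T|,
      compl_connected e,
      triangle_free e,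
      three_colorable e &
      forall u v : T, u != v -> ~~ e u v ->
        ~ triangle_free (add_edge e u v) \/ ~ three_colorable (add_edge e u v)].

Definition S_Z (T : finType) (e : rel T) (X A B : T) : {set T} :=
  [set v | [&& v != X, v != A, v != B, ~~ e v A & ~~ e v B]].

From mathcomp Require Import all_boot.

Set Implicit Arguments.
Unset Strict Implicit.
Unset Printing Implicit Defensive.

(* Adding the edge XZ creates no triangle, since the only neighbours of X
   are A and B; by minimality the new graph is therefore not 3-colourable,
   i.e. every proper 3-colouring gives X and Z the same colour.  The same
   argument shows that every vertex outside {X, A, B} whose colour differs
   from that of X is adjacent to A or B.  Using this and triangle-freeness,
   a proper colouring c can be modified into a proper colouring in which X
   keeps its colour k while Z gets the colour a of A: with b a colour other
   than a and k, the neighbours of B other than A get k, the remaining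
   neighbours of A get b, and every other vertex keeps b if it had it and
   gets a otherwise. *)

Definition proper_coloring (T : finType) (e : rel T) (c : T -> 'I_3) : Prop :=
  forall x y : T, e x y -> c x != c y.

Lemma ord3_avoid2 (i j : 'I_3) : exists m : 'I_3, (m != i) && (m != j).
Proof.
move: i j; do 2!case=> [[|[|[|//]]] ?];
  by [exists (@Ordinal 3 0 isT) | exists (@Ordinal 3 1 isT)
     | exists (@Ordinal 3 2 isT)].
Qed.

Section AddEdge.

Variables (T : finType) (e : rel T).

Lemma add_edgeP u v x y :
  add_edge e u v x y -> [\/ e x y, x = u /\ y = v | x = v /\ y = u].
Proof.
by case/or3P=> [|/andP[/eqP-> /eqP->]|/andP[/eqP-> /eqP->]]; constructor.
Qed.

Lemma proper_coloring_add_edge c u v :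
  proper_coloring e c -> c u != c v -> proper_coloring (add_edge e u v) c.
Proof.
move=> c_proper cuv x y /add_edgeP[/c_proper //|[-> ->]|[-> ->]] //.
by rewrite eq_sym.
Qed.

Hypotheses (esym : symmetric e) (eirr : irreflexive e).

Lemma triangle_free_add_edge u v :
  triangle_free e -> u != v -> (forall w, e u w -> ~~ e v w) ->
  triangle_free (add_edge e u v).
Proof.
move=> tf uv no_common x y z /and3P[].
have {}no_common w : e u w || e w u -> e v w || e w v -> False.
  by rewrite ![e w _]esym !orbb => /no_common/negP.
case/add_edgeP=> [exy|[-> ->]|[-> ->]];
case/add_edgeP=> [eyz|[? ?]|[? ?]];
case/add_edgeP=> [exz|[? ?]|[? ?]]; subst;
  rewrite ?eqxx // in uv; try by apply: (tf x y z); apply/and3P.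
all: match goal with
     | H : is_true (e ?w ?w) |- _ => by rewrite eirr in H
     | H1 : is_true (e ?a ?b), H2 : is_true (e ?c ?d) |- _ =>
         first [ by apply: (no_common a); rewrite ?H1 ?H2 ?orbT
               | by apply: (no_common b); rewrite ?H1 ?H2 ?orbT ]
     end.
Qed.

End AddEdge.

Lemma proper_coloring_eq_no_common_nbr (T : finType) (e : rel T) c u v :
  symmetric e -> irreflexive e -> minimal_prime_graph_complement e ->
  u != v -> ~~ e u v -> (forall w, e u w -> ~~ e v w) ->
  proper_coloring e c -> c u = c v.
Proof.
move=> esym eirr [_ _ tf _ maximal] uv nuv no_common c_proper.
apply/eqP/negPn/negP => cuv.
case: (maximal u v uv nuv); apply.
  exact: triangle_free_add_edge.
by exists c; apply: proper_coloring_add_edge.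
Qed.

Section DegreeTwoVertex.

Variables (T : finType) (e : rel T) (X A B : T).
Hypotheses (esym : symmetric e) (eirr : irreflexive e).
Hypothesis mpgc : minimal_prime_graph_complement e.
Hypothesis eX : forall y, e X y = (y == A) || (y == B).

Lemma eXA : e X A. Proof. by rewrite eX eqxx. Qed.
Lemma eXB : e X B. Proof. by rewrite eX eqxx orbT. Qed.

Lemma neq_XA : X != A. Proof. by apply: contraTneq eXA => ->; rewrite eirr. Qed.

Lemma coloring_A_neq_X c : proper_coloring e c -> c A != c X.
Proof. by move=> c_proper; rewrite eq_sym; apply: c_proper eXA. Qed.

Lemma coloring_far_eq c u : proper_coloring e c ->
  u != X -> u != A -> u != B -> ~~ e u A -> ~~ e u B -> c u = c X.
Proof.
move=> c_proper uX uA uB nuA nuB; symmetry.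
apply: proper_coloring_eq_no_common_nbr => //.
- by rewrite eq_sym.
- by rewrite eX negb_or uA uB.
by move=> w; rewrite eX => /orP[] /eqP->.
Qed.

Section Recolor.

Variables (c : T -> 'I_3) (b : 'I_3).

Definition recolor (v : T) : 'I_3 :=
  if v == A then c A
  else if e v B then c X
  else if (c v == b) || e v A then b
  else c A.

Hypotheses (c_proper : proper_coloring e c) (bX : b != c X) (bA : b != c A).

Lemma recolor_X : recolor X = c X.
Proof. by rewrite /recolor (negbTE neq_XA) eXB. Qed.

Lemma recolor_far u : u != A -> ~~ e u A -> ~~ e u B -> c u != b -> recolor u = c A.
Proof. by move=> uA nuA nuB cub; rewrite /recolor !ifN // negb_or cub. Qed.

Lemma recolor_nbr_A v : e v A -> recolor v != c A.
Proof.
move=> evA; have vA : v != A by apply: contraTneq evA => ->; rewrite eirr.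
have cAX := coloring_A_neq_X c_proper.
by rewrite /recolor (negbTE vA) evA orbT; case: ifP; rewrite // eq_sym.
Qed.

Lemma recolor_proper : proper_coloring e recolor.
Proof.
have [_ _ tf _ _] := mpgc.
have cAX := coloring_A_neq_X c_proper.
have far_class v w : v != A -> ~~ e v A -> ~~ e v B -> e v w -> ~~ e w B ->
    c v = c X.
  move=> vA nvA nvB evw nwB; apply: coloring_far_eq => //.
    by apply: contraNneq nvB => ->; rewrite eXB.
  by apply: contraNneq nwB => vB; rewrite esym -vB.
have b_class v w : v != A -> ~~ e v B -> (c v == b) || e v A -> e v w ->
    ~~ e w B -> e v A.
  move=> vA nvB /orP[/eqP cvb|//] evw nwB; apply: contraTT bX => nvA.
  by rewrite negbK -cvb (far_class v w).
move=> x y exy.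
have [xA | xA] := eqVneq x A; have [yA | yA] := eqVneq y A.
- by rewrite xA yA eirr in exy.
- by rewrite {1}/recolor xA eqxx eq_sym recolor_nbr_A // esym -xA.
- by rewrite {2}/recolor yA eqxx recolor_nbr_A // -yA.
rewrite /recolor (negbTE xA) (negbTE yA).
have [xB | nxB] := boolP (e x B); have [yB | nyB] := boolP (e y B).
- by case: (tf x y B); rewrite exy xB yB.
- by case: ifP => _; rewrite // eq_sym.
- by case: ifP.
have [xb | nxb] := boolP ((c x == b) || e x A);
  have [yb | nyb] := boolP ((c y == b) || e y A).
- have exA := b_class x y xA nxB xb exy nyB.
  have eyA : e y A by apply: (b_class y x); rewrite // esym.
  by case: (tf x y A); rewrite exy exA eyA.
- exact: bA.
- by rewrite eq_sym.
- have := c_proper exy.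
  move: nxb nyb; rewrite !negb_or => /andP[_ nxA] /andP[_ nyA].
  have eyx : e y x by rewrite esym.
  by rewrite (far_class x y) // (far_class y x) // eqxx.
Qed.

End Recolor.

Lemma no_far_vertex u :
  u != X -> u != A -> u != B -> ~~ e u A -> ~~ e u B -> False.
Proof.
move=> uX uA uB nuA nuB.
have [_ _ _ [c c_proper] _] := mpgc.
have [b /andP[bX bA]] := ord3_avoid2 (c X) (c A).
have cAX := coloring_A_neq_X c_proper.
have cub : c u != b by rewrite (coloring_far_eq c_proper) // eq_sym.
have := coloring_far_eq (recolor_proper c_proper bX bA) uX uA uB nuA nuB.
by rewrite recolor_X recolor_far //; apply/eqP.
Qed.

End DegreeTwoVertex.

Theorem lemma10 (T : finType) (e : rel T) (X A B : T) :
  simple_graph e ->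
  minimal_prime_graph_complement e ->
  A != B ->
  [set y | e X y] = [set A; B] ->
  S_Z e X A B = set0.
Proof.
move=> [esym eirr] mpgc _ NX.
have eX y : e X y = (y == A) || (y == B).
  by have := congr1 (fun S : {set T} => y \in S) NX; rewrite !inE.
apply/setP => u; rewrite !inE; apply/and5P => -[uX uA uB nuA nuB].
exact: (no_far_vertex esym eirr mpgc eX uX uA uB nuA nuB).
Qed.
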